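(* Let $M\subset X$ be nonempty, $F:X\rightrightarrows Y$ with nonempty values, and $\bar x\in M\cap M'$ such that $F(\bar x)$ is $K$-sequentially compact and $\bar x$ is a local ideal minimum for $F$ on $M$. Suppose there are $e\in K\setminus\{0\}$, $r>0$, $\ell>0$ such that for all $u\in(X\setminus M)\cap B(\bar x,r)$ and $v\in M\cap B(\bar x,r)$, $$F(u)+\ell\|u-v\|e\subset F(v)+K.$$ Then $\bar x$ is a local ideal minimum on $X$ (i.e., without constraints) for the set-valued map $G:X\rightrightarrows Y$, $G(x)=F(x)+\ell d_M(x)e$.
   Context: $X,Y$ are real normed spaces, $K\subset Y$ a pointed closed convex cone, $B(x,r)$ the open ball, $M'$ the set of accumulation points of $M$, $d_M(x)=\inf_{m\in M}\|x-m\|$. A nonempty $A\subset Y$ is $K$-sequentially compact if for every $(a_n)\subset A$ there is $(c_n)\subset K$ such that $(a_n-c_n)$ has a subsequence converging to an element of $A$. For nonempty $S\subset X$, $\bar x\in S$ is a local ideal minimum for $F$ on $S$ if there is $\varepsilon>0$ such that $F(\bar x)\not\subset F(x)+(Y\setminus -K)$ for all $x\in S\cap B(\bar x,\varepsilon)\setminus\{\bar x\}$; ''on $X$'' means $S=X$. *)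

From HB Require Import structures.
From mathcomp Require Import all_boot all_order all_algebra.
From mathcomp Require Import all_classical all_reals all_analysis.
Set Implicit Arguments. Unset Strict Implicit. Unset Printing Implicit Defensive.
Import Order.TTheory GRing.Theory Num.Theory.
Import numFieldNormedType.Exports.
Local Open Scope classical_set_scope.
Local Open Scope ring_scope.

Section Defs.
Variable R : realType.

Definition pointed_closed_convex_cone (Y : normedModType R) (K : set Y) : Prop :=
  [/\ K 0,
      (forall (t : R) k, 0 <= t -> K k -> K (t *: k)),
      (forall (t : R) k1 k2, 0 <= t <= 1 -> K k1 -> K k2 -> K (t *: k1 + (1 - t) *: k2)),
      (forall k, K k -> K (- k) -> k = 0) &
      closed K].

Definition oball (X : normedModType R) (x : X) (r : R) : set X :=
  [set y | `|x - y| < r].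

Definition accum_point (X : normedModType R) (M : set X) (x : X) : Prop :=
  forall eps : R, 0 < eps -> exists m, [/\ M m, m != x & `|x - m| < eps].

Definition distM (X : normedModType R) (M : set X) (x : X) : R :=
  inf [set `|x - m| | m in M].

Definition setsum (Y : normedModType R) (A B : set Y) : set Y :=
  [set a + b | a in A & b in B].

Definition K_seq_compact (Y : normedModType R) (K A : set Y) : Prop :=
  A !=set0 /\
  forall a : nat -> Y, (forall n, A (a n)) ->
    exists c : nat -> Y, (forall n, K (c n)) /\
      exists phi : nat -> nat, (forall n, (phi n < phi n.+1)%N) /\
        exists y, A y /\ (fun n => a (phi n) - c (phi n)) @ \oo --> y.

Definition local_ideal_min (X Y : normedModType R) (K : set Y)
  (F : X -> set Y) (S : set X) (xb : X) : Prop :=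
  S xb /\
  exists eps : R, 0 < eps /\
    forall x, S x -> oball xb eps x -> x != xb ->
      ~ (F xb `<=` setsum (F x) [set y | ~ K (- y)]).

End Defs.

From HB Require Import structures.
From mathcomp Require Import all_boot all_order all_algebra.
From mathcomp Require Import all_classical all_reals all_analysis.
From mathcomp Require Import ring lra.
Import Order.TTheory GRing.Theory Num.Theory.
Import numFieldNormedType.Exports.
Local Open Scope classical_set_scope.
Local Open Scope ring_scope.

(* Pick v_n in M \ {xb} with |x - v_n| -> d_M(x); local ideal minimality of F on M gives y_n in
   F(xb) with F(v_n) in y_n + K, and the calmness hypothesis yields
   F(x) + l|x - v_n| e in F(v_n) + K in y_n + K.  K-sequential compactness of F(xb) turns the y_n
   into a single y in F(xb) up to elements of K along a subsequence, and closedness of K lets the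
   inclusion pass to the limit: F(x) + l d_M(x) e in y + K, which is ideal minimality of G. *)

Lemma leq_increasing {phi : nat -> nat} :
  (forall n, (phi n < phi n.+1)%N) -> forall n, (n <= phi n)%N.
Proof. by move=> phiS; elim=> // n IH; exact: leq_ltn_trans IH (phiS n). Qed.

Lemma cvgn_subseq {T : topologicalType} {u : nat -> T} {a : T} {phi : nat -> nat} :
  (forall n, (phi n < phi n.+1)%N) -> u @ \oo --> a -> (u \o phi) @ \oo --> a.
Proof.
move=> phiS ua; apply: cvg_comp ua => P [N _ PN].
by exists N => // n /= Nn; apply: PN; exact: leq_trans Nn (leq_increasing phiS n).
Qed.

Lemma cone_addr_closed {R : realType} {Y : normedModType R} {K : set Y} :
  pointed_closed_convex_cone K -> forall a b, K a -> K b -> K (a + b).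
Proof.
case=> _ coneZ coneC _ _ a b Ka Kb.
have half01 : 0 <= (2 : R)^-1 <= 1 by rewrite invr_ge0 ler0n invf_le1 ?ler1n.
have := coneZ 2 _ (ler0n _ 2) (coneC _ _ _ half01 Ka Kb).
have -> : 1 - (2 : R)^-1 = 2^-1 by field.
by rewrite -scalerDr scalerA mulfV ?pnatr_eq0 // scale1r.
Qed.

Lemma not_subset_setsumNcone {R : realType} {Y : normedModType R} {K A B : set Y} :
  ~ (A `<=` setsum B [set y | ~ K (- y)]) <->
  exists2 y, A y & forall b, B b -> K (b - y).
Proof.
split=> [notsub | [y Ay Ky] sub].
  apply: contrapT => nowit; apply: notsub => y Ay; apply: contrapT => notin.
  apply: nowit; exists y => // b Bb; apply: contrapT => nK; apply: notin.
  by exists b => //; exists (y - b); [rewrite /= opprB | rewrite addrC subrK].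
have [b Bb [z /= nKz] bz] := sub y Ay.
apply: nKz; suff -> : - z = b - y by exact: Ky.
by rewrite -bz opprD addrA subrr add0r.
Qed.

Lemma local_ideal_min_witness {R : realType} {X Y : normedModType R} {K : set Y}
    {F : X -> set Y} {S : set X} {xb : X} :
  local_ideal_min K F S xb ->
  exists2 rho : R, 0 < rho & forall x, S x -> oball xb rho x -> x != xb ->
    exists2 y, F xb y & forall f, F x f -> K (f - y).
Proof.
case=> _ [rho [rho0 Fmin]]; exists rho => // x Sx xbx xxb.
exact/not_subset_setsumNcone/Fmin.
Qed.

Section Distance.
Context {R : realType} {X : normedModType R} {M : set X}.

Lemma distM_lbound x : has_lbound [set `|x - m| | m in M].
Proof. by exists 0 => _ [m _ <-]. Qed.

Lemma distM_le x m : M m -> distM M x <= `|x - m|.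
Proof. by move=> Mm; apply: (ge_inf (distM_lbound x)); exists m. Qed.

Lemma distM_ge0 x : M !=set0 -> 0 <= distM M x.
Proof.
by case=> m Mm; apply: lb_le_inf; [exists `|x - m|, m | move=> _ [? _ <-]].
Qed.

Lemma distM_eq0 x : M x -> distM M x = 0.
Proof.
move=> Mx; apply/eqP; rewrite eq_le distM_ge0 ?andbT; last by exists x.
by have := distM_le x x Mx; rewrite subrr normr0.
Qed.

Lemma distM_adherent x eps : M !=set0 -> 0 < eps ->
  exists2 m, M m & `|x - m| < distM M x + eps.
Proof.
case=> m0 Mm0 eps0.
have hinf : has_inf [set `|x - m| | m in M].
  by split; [exists `|x - m0|, m0 | exact: distM_lbound].
by have [_ [m Mm <-] lt] := inf_adherent eps0 hinf; exists m.
Qed.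

Lemma distM_adherent_punctured {xb} x eps : accum_point M xb -> 0 < eps ->
  exists m, [/\ M m, m != xb & `|x - m| < distM M x + eps].
Proof.
move=> accM eps0; have eps20 : 0 < eps / 2 by rewrite divr_gt0.
have M0 : M !=set0 by have [m [Mm _ _]] := accM _ ltr01; exists m.
have [m Mm lt] := distM_adherent x _ M0 eps20.
have [mxb|mxb] := eqVneq m xb; last by exists m; split => //; lra.
rewrite mxb in lt.
have [m' [Mm' m'xb lt']] := accM _ eps20; exists m'; split => //.
by have := ler_distD xb x m'; lra.
Qed.

Lemma distM_punctured_minimizing_seq {xb} x {eps} : accum_point M xb -> 0 < eps ->
  exists v : nat -> X, [/\ forall n, M (v n), forall n, v n != xb,
    forall n, `|x - v n| < distM M x + eps &
    (fun n => `|x - v n|) @ \oo --> distM M x].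
Proof.
move=> accM eps0.
have /choice[v vP] n := distM_adherent_punctured x _ accM (mulr_gt0 eps0 (harmonic_gt0 n)).
have epsh n : eps * harmonic n <= eps.
  by rewrite ler_piMr ?(ltW eps0) // /harmonic /= invf_le1 ?ler1n ?ltr0n.
exists v; split=> [n|n|n|]; try by have [] := vP n.
  by have [_ _ vlt] := vP n; have := epsh n; lra.
have harmonic_scaled : (fun n => distM M x + eps * harmonic n) @ \oo --> distM M x.
  rewrite -[X in _ --> X]addr0 -(mulr0 eps).
  by apply: cvgD; [exact: cvg_cst | apply: cvgM; [exact: cvg_cst | exact: cvg_harmonic]].
apply: (squeeze_cvgr _ (cvg_cst (distM M x)) harmonic_scaled).
by apply: nearW => n; have [Mv _ vlt] := vP n; rewrite distM_le //= ltW.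
Qed.

End Distance.

Lemma K_seq_compact_cone_limit {R : realType} {Y : normedModType R} {K A : set Y}
    {y : nat -> Y} :
  pointed_closed_convex_cone K -> K_seq_compact K A -> (forall n, A (y n)) ->
  exists2 a, A a & forall (z : nat -> Y) zl, z @ \oo --> zl ->
    (forall n, K (z n - y n)) -> K (zl - a).
Proof.
move=> coneK [_ /(_ y) KcA] Ay.
have [c [Kc [phi [phiS [a [Aa ya]]]]]] := KcA Ay.
exists a => // z zl zzl Kzy.
have lim : (fun n => z (phi n) - (y (phi n) - c (phi n))) @ \oo --> zl - a.
  by apply: cvgB; [exact: cvgn_subseq phiS zzl | exact: ya].
case: (coneK) => _ _ _ _ closedK; apply: (closed_cvg _ closedK _ _ lim).
by apply: nearW => n /=; rewrite opprB addrA addrAC; apply: cone_addr_closed.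
Qed.

Definition penalized_map {R : realType} {X Y : normedModType R} (M : set X)
    (F : X -> set Y) (e : Y) (l : R) (x : X) : set Y :=
  [set y + (l * distM M x) *: e | y in F x].

Section PenalizedMap.
Context {R : realType} {X Y : normedModType R} {K : set Y} {M : set X}.
Context {F : X -> set Y} {xb : X} {e : Y} {r l rho : R}.
Hypotheses (coneK : pointed_closed_convex_cone K) (Mxb : M xb) (accM : accum_point M xb).
Hypothesis KcF : K_seq_compact K (F xb).
Hypothesis F_calm : forall u v, ~ M u -> oball xb r u -> M v -> oball xb r v ->
  [set y + (l * `|u - v|) *: e | y in F u] `<=` setsum (F v) K.
Hypothesis F_min : forall x, M x -> oball xb rho x -> x != xb ->
  exists2 y, F xb y & forall f, F x f -> K (f - y).

Let G := penalized_map M F e l.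

Lemma penalized_map_witness_outside x delta : ~ M x -> `|xb - x| < delta ->
  3 * delta <= r -> 3 * delta <= rho ->
  exists2 y, F xb y & forall g, G x g -> K (g - y).
Proof.
move=> Mx xbx dr drho.
have delta0 : 0 < delta by apply: le_lt_trans xbx.
have [v [Mv vxb vlt vcvg]] := distM_punctured_minimizing_seq x accM delta0.
have dx : distM M x <= `|xb - x| by rewrite distrC distM_le.
have vball n : `|xb - v n| < 3 * delta.
  by have := ler_distD x xb (v n); have := vlt n; rewrite distrC; lra.
have /choice[y yP] n : exists y, F xb y /\ forall f, F (v n) f -> K (f - y).
  have [|y ? ?] := F_min (v n) (Mv n) _ (vxb n); last by exists y.
  by rewrite /oball /=; have := vball n; lra.
have [ys Fys ysK] := K_seq_compact_cone_limit coneK KcF (fun n => (yP n).1).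
exists ys => // _ [f Ff <-].
apply: ysK (fun n => f + (l * `|x - v n|) *: e) _ _ _.
  apply: cvgD; first exact: cvg_cst.
  by apply: cvgZ; [apply: cvgM; [exact: cvg_cst | exact: vcvg] | exact: cvg_cst].
move=> n; have vr : oball xb r (v n) by rewrite /oball /=; have := vball n; lra.
have xr : oball xb r x by rewrite /oball /=; lra.
have [|f' Ff' [k Kk <-]] := F_calm x (v n) Mx xr (Mv n) vr (f + (l * `|x - v n|) *: e).
  by exists f.
by rewrite addrAC; apply: cone_addr_closed => //; exact: (yP n).2.
Qed.

Lemma penalized_map_witness x delta : oball xb delta x -> x != xb ->
  3 * delta <= r -> 3 * delta <= rho ->
  exists2 y, F xb y & forall g, G x g -> K (g - y).
Proof.
move=> xbx xxb dr drho; have [Mx|Mx] := pselect (M x); last first.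
  exact: penalized_map_witness_outside x delta Mx xbx dr drho.
have [|y Fy yK] := F_min x Mx _ xxb.
  by have := normr_ge0 (xb - x); rewrite /oball /= in xbx *; lra.
by exists y => // _ [f Ff <-]; rewrite distM_eq0 // mulr0 scale0r addr0; exact: yK.
Qed.

End PenalizedMap.

Theorem mainTheorem15 (R : realType) (X Y : normedModType R) (K : set Y)
  (M : set X) (F : X -> set Y) (xb : X) (e : Y) (r l : R) :
  pointed_closed_convex_cone K ->
  M !=set0 ->
  (forall x, F x !=set0) ->
  M xb -> accum_point M xb ->
  K_seq_compact K (F xb) ->
  local_ideal_min K F M xb ->
  K e -> e != 0 -> 0 < r -> 0 < l ->
  (forall u v, ~ M u -> oball xb r u -> M v -> oball xb r v ->
     [set y + (l * `|u - v|) *: e | y in F u] `<=` setsum (F v) K) ->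
  local_ideal_min K (fun x => [set y + (l * distM M x) *: e | y in F x]) setT xb.
Proof.
move=> coneK _ _ Mxb accM KcF /local_ideal_min_witness[rho rho0 F_min] _ _ r0 _ F_calm.
split=> //; pose delta := Num.min r rho / 3.
have [dr drho] : 3 * delta <= r /\ 3 * delta <= rho.
  by rewrite mulrC divfK ?pnatr_eq0 // !ge_min !lexx orbT.
exists delta; split; first by rewrite divr_gt0 // lt_min r0.
move=> x _ xbx xxb; apply/not_subset_setsumNcone.
have [y Fy yK] := penalized_map_witness coneK Mxb accM KcF F_calm F_min x delta xbx xxb dr drho.
by exists y => //; exists y => //; rewrite distM_eq0 // mulr0 scale0r addr0.
Qed.
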